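(* Let $S$ be a numerical semigroup with minimal generating set $P$, $D=S^*+S^*$, and $G=G(S)=(V,E)$. Then $|V\cap D|\ge\deg(u)$ for every $u\in V\cap D$. Moreover, if $V\cap D=\{u\}$, then $N_G(u)=\{x\}$ for some $x\in V\cap P$, and $u=2x$.
   Context: A numerical semigroup is a subset $S\subseteq\mathbb N$ containing $0$, closed under addition, with finite complement; $S^*=S\setminus\{0\}$, $m=\min S^*$, $P=S^*\setminus D$. $X=\{s\in S^*: s-m\notin S\}$. The graph $G(S)$ has edge set all subsets $\{x,y\}\subseteq X$ ($x=y$ allowed) with $x+y\in X$, and vertex set $V$ the endvertices of these edges. $N_G(x)=\{y\in X: x+y\in X\}$ and $\deg(x)=|N_G(x)|$. *)

From mathcomp Require Import all_boot.
Set Implicit Arguments. Unset Strict Implicit. Unset Printing Implicit Defensive.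

Definition numerical_semigroup (S : pred nat) : Prop :=
  [/\ 0 \in S,
      (forall a b, a \in S -> b \in S -> a + b \in S)
    & exists N, forall n, N <= n -> n \in S].

Definition Sstar (S : pred nat) (n : nat) : bool := (0 < n) && (n \in S).

Definition is_multiplicity (S : pred nat) (m : nat) : Prop :=
  Sstar S m /\ (forall s, Sstar S s -> m <= s).

(* D = S^* + S^* : n = a + b with a, b ∈ S^*  (necessarily a <= n) *)
Definition inD (S : pred nat) (n : nat) : bool :=
  [exists a : 'I_n.+1, Sstar S a && Sstar S (n - a) && (a + (n - a) == n)].

(* P = S^* \ D  (the minimal generating set) *)
Definition inP (S : pred nat) (n : nat) : bool := Sstar S n && ~~ inD S n.

Definition inX (S : pred nat) (m s : nat) : bool := Sstar S s && (s - m \notin S).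

Definition inN (S : pred nat) (m x y : nat) : bool := inX S m y && inX S m (x + y).

(* V = endvertices of edges {x,y} ⊆ X (x = y allowed) with x + y ∈ X *)
(* Since N_G(v) ⊆ X, it suffices to search y below any bound B of X;
   the theorem assumes every element of X is < B, so this is exactly V. *)
Definition inV (S : pred nat) (m B v : nat) : bool :=
  inX S m v && has (inN S m v) (iota 0 B).

(* Cardinality of a subset of [0, B): used with B an upper bound for X,
   so that it is the true cardinality of the (finite) set. *)
Definition card_below (B : nat) (p : pred nat) : nat := count p (iota 0 B).

(* Write u = a + b with a, b in S^*.  For a neighbour y of u, the element
   b + y lies in X (it is a summand of u + y), a lies in X (it is a summand
   of u), and a + (b + y) = u + y lies in X, so b + y is a vertex of G in D.
   Hence y |-> b + y embeds N_G(u) into V ∩ D.  If V ∩ D = {u}, the same map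
   with the roles of a and b swapped forces every neighbour y to satisfy
   b + y = u = a + y, i.e. y = a = b, and then u = 2a with a in P because
   a in D would make a a second vertex of V ∩ D. *)

From mathcomp Require Import all_boot.
From mathcomp Require Import zify.
Set Implicit Arguments. Unset Strict Implicit.

Lemma card_below_inj_le (B : nat) (p q : pred nat) (f : nat -> nat) :
  injective f -> (forall y, p y -> q (f y)) -> (forall z, q z -> z < B) ->
  card_below B p <= card_below B q.
Proof.
move=> injf pq qB; rewrite /card_below -!size_filter -(size_map f).
apply: uniq_leq_size; first by rewrite map_inj_uniq ?filter_uniq ?iota_uniq.
move=> z /mapP[y]; rewrite mem_filter => /andP[py _] ->.
have qfy := pq y py; by rewrite mem_filter qfy mem_iota add0n qB.
Qed.

Section NumericalSemigroupGraph.
Variables (S : pred nat) (m B : nat).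
Hypothesis semigroupS : numerical_semigroup S.
Hypothesis multiplicity_m : is_multiplicity S m.
Hypothesis inX_ltB : forall x, inX S m x -> x < B.

Lemma semigroupD a b : a \in S -> b \in S -> a + b \in S.
Proof. by case: semigroupS => _ addS _; apply: addS. Qed.

Lemma SstarD a b : Sstar S a -> Sstar S b -> Sstar S (a + b).
Proof. by case/andP=> a_gt0 Sa /andP[_ Sb]; rewrite /Sstar semigroupD ?addn_gt0 ?a_gt0. Qed.

Lemma inX_summand t r : inX S m (t + r) -> Sstar S t -> r \in S -> inX S m t.
Proof.
case/andP=> _ trmNS St Sr; rewrite /inX St /=; apply: contra trmNS => tmS.
have le_mt : m <= t by case: multiplicity_m => _; apply.
by rewrite -addnBAC // semigroupD.
Qed.

Lemma inDP n : reflect (exists a b, [/\ Sstar S a, Sstar S b & a + b = n]) (inD S n).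
Proof.
apply: (iffP existsP) => [[a /andP[/andP[Sa Sna] /eqP <-]] | [a [b [Sa Sb <-]]]].
  by exists (val a), (n - a).
have lt_a_ab1 : a < (a + b).+1 by rewrite ltnS leq_addr.
by exists (Ordinal lt_a_ab1); rewrite /= addKn Sa Sb eqxx.
Qed.

Lemma inV_of_inN v y : Sstar S v -> inN S m v y -> inV S m B v.
Proof.
move=> Sv /andP[Xy Xvy].
have Sy : y \in S by case/andP: Xy => /andP[].
rewrite /inV (inX_summand Xvy) //=.
apply/hasP; exists y; last exact/andP.
by rewrite mem_iota add0n inX_ltB.
Qed.

Lemma shift_inVD u a b y : Sstar S a -> Sstar S b -> a + b = u -> inN S m u y ->
  inV S m B (b + y) && inD S (b + y).
Proof.
move=> Sa Sb <- /andP[Xy Xaby].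
have Sy : Sstar S y by case/andP: Xy.
have Sby : Sstar S (b + y) := SstarD Sb Sy.
have Xby : inX S m (b + y).
  by apply: (inX_summand (r := a)); [rewrite addnC addnA | | case/andP: Sa].
have Xa : inX S m a.
  by apply: (inX_summand (r := b + y)); [rewrite addnA | | case/andP: Sby].
apply/andP; split; last by apply/inDP; exists b, y.
by apply: (inV_of_inN (y := a) Sby); rewrite /inN Xa addnC addnA Xaby.
Qed.

Lemma deg_le_card_VD u : inD S u ->
  card_below B (inN S m u) <= card_below B (fun v => inV S m B v && inD S v).
Proof.
case/inDP=> a [b [Sa Sb Eu]].
apply: (card_below_inj_le (f := addn b)); first exact: addnI.
  by move=> y; apply: shift_inVD Eu.
by move=> z /andP[/andP[/inX_ltB]].
Qed.

Lemma unique_VD_neighbour u : (forall v, (inV S m B v && inD S v) = (v == u)) ->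
  exists x, [/\ inV S m B x, inP S x, (forall y, inN S m u y = (y == x)) & u = 2 * x].
Proof.
move=> VDu; have /andP[/andP[Xu /hasP[y0 _ Ny0]] /inDP[a [b [Sa Sb Eu]]]] :
  inV S m B u && inD S u by rewrite VDu.
have neighbour_eq y : inN S m u y -> y = a /\ a = b.
  move=> Ny; have /eqP Eby : b + y == u by rewrite -VDu (shift_inVD Sa Sb Eu Ny).
  have /eqP Eay : a + y == u by rewrite -VDu (shift_inVD Sb Sa _ Ny) // addnC.
  by split; lia.
have [y0a ab] := neighbour_eq y0 Ny0; subst y0 b.
have Xa : inX S m a by case/andP: Ny0.
have Naa : inN S m a a by rewrite /inN Xa Eu Xu.
have Eu2 : u = 2 * a by rewrite -Eu mul2n addnn.
exists a; split=> //; first exact: inV_of_inN Sa Naa.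
  rewrite /inP Sa /=; apply/negP => Da.
  have /eqP Eau : a == u by rewrite -VDu Da (inV_of_inN Sa Naa).
  by case/andP: Sa; lia.
by move=> y; apply/idP/eqP=> [/neighbour_eq[] | ->].
Qed.

End NumericalSemigroupGraph.

Theorem proposition4p15 (S : pred nat) (m B : nat) :
  numerical_semigroup S ->
  is_multiplicity S m ->
  (forall x, inX S m x -> x < B) ->
  (forall u, inV S m B u -> inD S u ->
     card_below B (inN S m u)
       <= card_below B (fun v => inV S m B v && inD S v))
  /\
  (forall u, (forall v, (inV S m B v && inD S v) = (v == u)) ->
     exists x, [/\ inV S m B x, inP S x,
                  (forall y, inN S m u y = (y == x)) & u = 2 * x]).
Proof.
move=> semigroupS multiplicity_m inX_ltB; split.
  by move=> u _; apply: deg_le_card_VD.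
exact: unique_VD_neighbour.
Qed.
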